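(* Let $q\ge5$ be prime and $r,s\ge2$ integers. Then $\chi_D(LG_q\otimes K_{r,s})=r+s+1$.
   Context: Let $V=\mathbb{F}_q^3$, $\mathcal{P}$ the set of $1$-dimensional subspaces (''points'') and $\mathcal{L}$ the set of $2$-dimensional subspaces (''lines'') of $V$. The graph $LG_q\otimes K_{r,s}$ has vertex set $(\mathcal{P}\times[r])\sqcup(\mathcal{L}\times[s])$, where $[m]=\{1,\dots,m\}$, and for $p\in\mathcal{P}$, $l\in\mathcal{L}$, $i\in[r]$, $j\in[s]$, the vertex $(p,i)$ is adjacent to $(l,j)$ iff $p\subset l$; there are no other edges. A coloring is distinguishing if the only graph automorphism mapping every color class onto itself is the identity; $\chi_D(G)$ is the minimum number of colors of a proper distinguishing coloring of $G$. *)

From HB Require Import structures.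
From mathcomp Require Import all_boot all_order all_algebra all_fingroup.
Set Implicit Arguments. Unset Strict Implicit. Unset Printing Implicit Defensive.

Local Open Scope ring_scope.

Definition is_graph_aut (T : finType) (e : rel T) (f : {perm T}) : Prop :=
  forall x y, e (f x) (f y) = e x y.

Definition proper_coloring (T : finType) (e : rel T) (k : nat) (c : T -> 'I_k) : Prop :=
  forall x y, e x y -> c x != c y.

(* distinguishing: the only automorphism mapping every color class onto itself
   (equivalently, preserving the color of every vertex) is the identity *)
Definition distinguishing (T : finType) (e : rel T) (k : nat) (c : T -> 'I_k) : Prop :=
  forall f : {perm T}, is_graph_aut e f -> (forall x, c (f x) = c x) -> f = 1%g.

Definition proper_dist_colorable (T : finType) (e : rel T) (k : nat) : Prop :=
  exists c : T -> 'I_k, proper_coloring e c /\ distinguishing e c.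

Definition chiD_is (T : finType) (e : rel T) (n : nat) : Prop :=
  proper_dist_colorable e n /\ (forall k, (k < n)%N -> ~ proper_dist_colorable e k).

Notation vec q := 'rV['F_q]_3.

Definition span_set (q : nat) (A : 'M['F_q]_3) : {set vec q} :=
  [set x : vec q | (x <= A)%MS].

Definition is_subspace_of_dim (q d : nat) (S : {set vec q}) : bool :=
  [exists A : 'M['F_q]_3, (\rank A == d) && (S == span_set A)].

Definition raw_vertex (q r s : nat) : finType :=
  (({set vec q} * 'I_r) + ({set vec q} * 'I_s))%type.

Definition valid_vertex (q r s : nat) (x : raw_vertex q r s) : bool :=
  match x with
  | inl (p, _) => @is_subspace_of_dim q 1%N p
  | inr (l, _) => @is_subspace_of_dim q 2%N l
  end.

(* vertex set of LG_q (x) K_{r,s} : (P x [r]) + (L x [s]) *)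
Definition LGK_vertex (q r s : nat) : finType := {x : raw_vertex q r s | valid_vertex x}.

Definition raw_adj (q r s : nat) (x y : raw_vertex q r s) : bool :=
  match x, y with
  | inl (p, _), inr (l, _) => p \subset l
  | inr (l, _), inl (p, _) => p \subset l
  | _, _ => false
  end.

Definition LGK_adj (q r s : nat) : rel (LGK_vertex q r s) :=
  fun x y => raw_adj (val x) (val y).

From HB Require Import structures.
From mathcomp Require Import all_boot all_order all_algebra all_fingroup.
From mathcomp Require Import ring zify.
Set Implicit Arguments. Unset Strict Implicit. Unset Printing Implicit Defensive.
Import GRing.Theory.
Local Open Scope ring_scope.

(* Copies (p, i), (p, i') of a point (or of a line) have the same neighbourhood, so the
   transposition exchanging them is an automorphism and a distinguishing colouring gives
   them different colours; a point and a line through it share no colour.  Hence at least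
   r + s colours are needed.  With exactly r + s colours all points carry the same palette,
   complementary to the common palette of all lines, so composing the collineation that
   swaps the first two coordinates with a colour-matching bijection of the copies yields a
   non-trivial colour-preserving automorphism.

   Conversely, give copy i of a point colour i and copy j of a line colour r + j, then
   recolour a few copies with the extra colour r + s so that every colour-preserving
   automorphism preserves the two sides, induces a collineation of PG(2, q), and fixes the
   points (0:0:1), (1:0:1), (0:1:1) and the lines z = 0, x + z = 0.  Over the prime field
   F_q every point is constructed from these by joins and meets, so the collineation is the
   identity, and the colours then pin down every copy. *)

Section Subspaces.
Variable q : nat.
Local Notation K := 'F_q.
Local Notation dim1 := (@is_subspace_of_dim q 1).
Local Notation dim2 := (@is_subspace_of_dim q 2).

Lemma span_set_subset (A B : 'M[K]_3) :
  (span_set A \subset span_set B) = (A <= B)%MS.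
Proof.
apply/subsetP/idP => [AB | AB x]; last by rewrite !inE => /submx_trans; apply.
by apply/row_subP => i; have := AB (row i A); rewrite !inE; apply; apply: row_sub.
Qed.

Lemma span_set_eq (A B : 'M[K]_3) :
  (A <= B)%MS -> (\rank B <= \rank A)%N -> span_set A = span_set B.
Proof.
move=> AB rBA; have /eqmxP eqAB : (A == B)%MS.
  by rewrite -(mxrank_leqif_eq AB) eqn_leq rBA mxrankS.
by apply/setP => x; rewrite !inE eqAB.
Qed.

Lemma subspace_of_dimP d (S : {set vec q}) :
  is_subspace_of_dim d S -> exists2 A : 'M[K]_3, \rank A = d & S = span_set A.
Proof. by move=> /existsP [A /andP [/eqP rA /eqP ->]]; exists A. Qed.

Lemma subspace_of_dim_span (A : 'M[K]_3) : is_subspace_of_dim (\rank A) (span_set A).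
Proof. by apply/existsP; exists A; rewrite !eqxx. Qed.

Lemma subspace_of_dim_subset_eq d (S T : {set vec q}) :
  is_subspace_of_dim d S -> is_subspace_of_dim d T -> S \subset T -> S = T.
Proof.
move=> /subspace_of_dimP [A rA ->] /subspace_of_dimP [B rB ->].
by rewrite span_set_subset => AB; apply: span_set_eq; rewrite ?rA ?rB.
Qed.

Lemma mx0_in_subspace d (S : {set vec q}) : is_subspace_of_dim d S -> 0 \in S.
Proof. by case/subspace_of_dimP => A _ ->; rewrite inE sub0mx. Qed.

Lemma rank_adds_points (A B : 'M[K]_3) : \rank A = 1%N -> \rank B = 1%N ->
  span_set A != span_set B -> \rank (A + B)%MS = 2%N.
Proof.
move=> rA rB neAB; apply/eqP; rewrite eqn_leq; apply/andP; split.
  by have := mxrank_sum_cap A B; rewrite rA rB; lia.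
rewrite ltnNge; apply: contra neAB => le1.
have ABA : (A + B <= A)%MS.
  have := mxrankS (addsmxSl A B).
  by rewrite -(mxrank_leqif_sup (addsmxSl A B)) eqn_leq rA le1 => ->.
by apply/eqP/esym/span_set_eq; [exact: submx_trans (addsmxSr A B) ABA | rewrite rA rB].
Qed.

Lemma span_adds_points_dim (A B : 'M[K]_3) : \rank A = 1%N -> \rank B = 1%N ->
  span_set A != span_set B -> dim2 (span_set (A + B)%MS).
Proof.
by move=> rA rB neAB; have := subspace_of_dim_span (A + B)%MS; rewrite rank_adds_points.
Qed.

Lemma join_points (p p' : {set vec q}) : dim1 p -> dim1 p' -> p != p' ->
  exists l, [/\ dim2 l, p \subset l & p' \subset l].
Proof.
move=> /subspace_of_dimP [A rA ->] /subspace_of_dimP [B rB ->] neAB.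
exists (span_set (A + B)%MS); rewrite !span_set_subset addsmxSl addsmxSr.
by split=> //; apply: span_adds_points_dim.
Qed.

Lemma two_points_one_line (p p' l l' : {set vec q}) :
  dim1 p -> dim1 p' -> dim2 l -> dim2 l' -> p != p' ->
  p \subset l -> p' \subset l -> p \subset l' -> p' \subset l' -> l = l'.
Proof.
move=> /subspace_of_dimP [A rA ->] /subspace_of_dimP [B rB ->] dl dl' neAB.
have dJ := span_adds_points_dim rA rB neAB.
have joinE l0 : dim2 l0 -> span_set A \subset l0 -> span_set B \subset l0 ->
    span_set (A + B)%MS = l0.
  move=> dl0 Al0 Bl0; apply: subspace_of_dim_subset_eq dJ (dl0) _.
  case/subspace_of_dimP: dl0 Al0 Bl0 => C _ ->; rewrite !span_set_subset => AC BC.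
  by rewrite addsmx_sub AC BC.
by move=> pl p'l pl' p'l'; rewrite -(joinE l) // -(joinE l').
Qed.

Definition point_of (v : 'rV[K]_3) : {set vec q} := span_set <<v>>%MS.
Definition line_of (n : 'cV[K]_3) : {set vec q} := span_set (kermx n).

Lemma point_of_dim v : v != 0 -> dim1 (point_of v).
Proof. by move=> v_nz; have := subspace_of_dim_span <<v>>%MS; rewrite genmxE rank_rV v_nz. Qed.

Lemma line_of_dim n : n != 0 -> dim2 (line_of n).
Proof.
move=> n_nz; have := subspace_of_dim_span (kermx n); rewrite mxrank_ker.
by have := rank_leq_col n; rewrite -mxrank_eq0 in n_nz; case: (\rank n) n_nz => [|[]].
Qed.

Lemma point_of_subset_span v (A : 'M[K]_3) : (point_of v \subset span_set A) = (v <= A)%MS.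
Proof. by rewrite span_set_subset genmxE. Qed.

Lemma point_of_subset_line_of v n : (point_of v \subset line_of n) = (v *m n == 0).
Proof. by rewrite point_of_subset_span sub_kermx. Qed.

Lemma point_of_scale (k : K) v : k != 0 -> point_of (k *: v) = point_of v.
Proof. by move=> k_nz; apply/setP => x; rewrite !inE !genmxE (eqmx_scale _ k_nz). Qed.

Lemma point_of_dimP (p : {set vec q}) : dim1 p -> exists2 v, v != 0 & p = point_of v.
Proof.
case/subspace_of_dimP => A rA ->; have v_nz : nz_row A != 0.
  by rewrite nz_row_eq0 -mxrank_eq0 rA.
exists (nz_row A) => //; apply/esym/span_set_eq; rewrite genmxE ?nz_row_sub //.
by rewrite rank_rV v_nz rA.
Qed.

Lemma meet_lines (l l' : {set vec q}) : dim2 l -> dim2 l' ->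
  exists p, [/\ dim1 p, p \subset l & p \subset l'].
Proof.
move=> /subspace_of_dimP [A rA ->] /subspace_of_dimP [B rB ->].
have rAB : (0 < \rank (A :&: B))%N.
  by have := mxrank_sum_cap A B; have := rank_leq_col (A + B)%MS; rewrite rA rB; lia.
set v := nz_row (A :&: B)%MS.
have v_nz : v != 0 by rewrite nz_row_eq0 -mxrank_eq0 -lt0n.
exists (point_of v); rewrite !point_of_subset_span; split; first exact: point_of_dim.
- exact: submx_trans (nz_row_sub _) (capmxSl _ _).
- exact: submx_trans (nz_row_sub _) (capmxSr _ _).
Qed.

Lemma line_avoiding (p p' : {set vec q}) : dim1 p -> dim1 p' -> p != p' ->
  exists l, [/\ dim2 l, p \subset l & ~~ (p' \subset l)].
Proof.
move=> /subspace_of_dimP [A rA ->] /subspace_of_dimP [B rB ->] neAB.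
have rAB := rank_adds_points rA rB neAB.
set C := ((A + B)%MS)^C%MS.
have rC : \rank C = 1%N by rewrite mxrank_compl rAB.
have capAC : \rank (A :&: C)%MS = 0%N.
  apply/eqP; rewrite mxrank_eq0 -submx0 -(capmx_compl (A + B)%MS).
  exact: capmxS (addsmxSl _ _) _.
have rAC : \rank (A + C)%MS = 2%N.
  by have := mxrank_sum_cap A C; rewrite capAC rA rC addn0.
exists (span_set (A + C)%MS); rewrite !span_set_subset addsmxSl; split=> //.
  by have := subspace_of_dim_span (A + C)%MS; rewrite rAC.
apply/negP => BAC.
have : (A + B + C <= A + C)%MS by rewrite !addsmx_sub addsmxSl BAC addsmxSr.
move/mxrankS; have /eqP -> := addsmx_compl_full (A + B)%MS.
by rewrite rAC.
Qed.

Lemma point_off_line (l l' : {set vec q}) : dim2 l -> dim2 l' -> l != l' ->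
  exists p, [/\ dim1 p, p \subset l & ~~ (p \subset l')].
Proof.
move=> dl dl' nell'.
have /subsetPn [x xl xl'] : ~~ (l \subset l').
  by apply: contra nell' => /(subspace_of_dim_subset_eq dl dl') ->.
have x_nz : x != 0 by apply: contraNneq xl' => ->; apply: mx0_in_subspace dl'.
case/subspace_of_dimP: dl xl => A _ ->; rewrite inE => xA.
exists (point_of x); rewrite point_of_subset_span xA; split=> //; first exact: point_of_dim.
by apply: contra xl' => /subsetP; apply; rewrite inE genmxE.
Qed.

Lemma neq_points_off_line (p p' l : {set vec q}) : p \subset l -> ~~ (p' \subset l) -> p != p'.
Proof. by move=> pl; apply: contraNneq => <-. Qed.

Lemma neq_lines_off_point (p l l' : {set vec q}) : p \subset l -> ~~ (p \subset l') -> l != l'.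
Proof. by move=> pl; apply: contraNneq => <-. Qed.

Definition rv3 (a b c : K) : 'rV[K]_3 := \row_(i < 3) nth 0 [:: a; b; c] i.
Definition cv3 (a b c : K) : 'cV[K]_3 := \col_(i < 3) nth 0 [:: a; b; c] i.

Lemma rv3E (v : 'rV[K]_3) : v = rv3 (v 0 0) (v 0 1) (v 0 2%:R).
Proof.
apply/matrixP => i j; rewrite !ord1 mxE.
by case: j => [[|[|[|]]] ?] //=; congr (v _ _); apply: val_inj.
Qed.

Lemma scale_rv3 k a b c : k *: rv3 a b c = rv3 (k * a) (k * b) (k * c).
Proof. by apply/matrixP => i j; rewrite !mxE; case: j => [[|[|[|]]] ?] //=; rewrite mulr0. Qed.

Lemma rv3_eq0 a b c : (rv3 a b c == 0) = [&& a == 0, b == 0 & c == 0].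
Proof.
apply/eqP/and3P => [v0 | [/eqP -> /eqP -> /eqP ->]].
  have := congr1 (fun v : 'rV[K]_3 => (v 0 0, v 0 1, v 0 2%:R)) v0.
  by rewrite !mxE => -[-> -> ->].
by apply/matrixP => i j; rewrite !mxE; case: j => [[|[|[|]]] ?].
Qed.

Lemma cv3_eq0 a b c : (cv3 a b c == 0) = [&& a == 0, b == 0 & c == 0].
Proof.
apply/eqP/and3P => [n0 | [/eqP -> /eqP -> /eqP ->]].
  have := congr1 (fun n : 'cV[K]_3 => (n 0 0, n 1 0, n 2%:R 0)) n0.
  by rewrite !mxE => -[-> -> ->].
by apply/matrixP => i j; rewrite !mxE; case: i => [[|[|[|]]] ?].
Qed.

Lemma point_of_subset_line_of3 a b c x y z :
  (point_of (rv3 a b c) \subset line_of (cv3 x y z)) = (a * x + b * y + c * z == 0).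
Proof.
rewrite point_of_subset_line_of.
have -> : rv3 a b c *m cv3 x y z = (a * x + b * y + c * z)%:M.
  by apply/matrixP => i j; rewrite !ord1 !mxE !big_ord_recr big_ord0 /= !mxE /= add0r mulr1n.
by apply/eqP/eqP => [/matrixP/(_ 0 0) | ->]; rewrite ?mxE ?mulr1n ?raddf0.
Qed.

Lemma point_normal_form (p : {set vec q}) : dim1 p ->
  [\/ exists a b, p = point_of (rv3 a b 1),
       exists c, p = point_of (rv3 1 c 0) | p = point_of (rv3 0 1 0)].
Proof.
case/point_of_dimP => v + ->; rewrite (rv3E v).
move: (v 0 0) (v 0 1) (v 0 2%:R) => a b c v_nz.
have [c0|c_nz] := eqVneq c 0; last first.
  apply: Or31; exists (c^-1 * a), (c^-1 * b).
  by rewrite -(point_of_scale _ (invr_neq0 c_nz)) scale_rv3 mulVf.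
have [a0|a_nz] := eqVneq a 0; last first.
  apply: Or32; exists (a^-1 * b).
  by rewrite -(point_of_scale _ (invr_neq0 a_nz)) scale_rv3 c0 mulr0 mulVf.
have [b0|b_nz] := eqVneq b 0; first by move: v_nz; rewrite rv3_eq0 a0 b0 c0 !eqxx.
by apply: Or33; rewrite -(point_of_scale _ (invr_neq0 b_nz)) scale_rv3 a0 c0 mulr0 mulVf.
Qed.

End Subspaces.

(* [Pabc] is the point (a:b:c), [Labc] the line a x + b y + c z = 0. *)
Notation P001 := (point_of (rv3 0 0 1)).
Notation P100 := (point_of (rv3 1 0 0)).
Notation P010 := (point_of (rv3 0 1 0)).
Notation P101 := (point_of (rv3 1 0 1)).
Notation P011 := (point_of (rv3 0 1 1)).
Notation L001 := (line_of (cv3 0 0 1)).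
Notation L100 := (line_of (cv3 1 0 0)).
Notation L101 := (line_of (cv3 1 0 1)).

Ltac incidence :=
  rewrite ?rv3_eq0 ?cv3_eq0 ?point_of_subset_line_of3;
  rewrite ?(mul0r, mulr0, mul1r, mulr1, add0r, addr0, mulN1r, mulrN1, opprK, oppr_eq0, oner_eq0);
  rewrite ?andbF ?andFb //; try (apply/eqP; ring).

Lemma line_through_point q (p : {set vec q}) :
  is_subspace_of_dim 1 p -> exists2 l, is_subspace_of_dim 2 l & p \subset l.
Proof.
have dP100 : @is_subspace_of_dim q 1 P100 by apply: point_of_dim; incidence.
have dP010 : @is_subspace_of_dim q 1 P010 by apply: point_of_dim; incidence.
have ne : P100 != P010 :> {set vec q}.
  by apply: (neq_points_off_line (l := line_of (cv3 0 1 0))); incidence.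
move=> dp; have [-> | neX] := eqVneq p P100.
  by have [l [dl pl _]] := join_points dP100 dP010 ne; exists l.
by have [l [dl pl _]] := join_points dp dP100 neX; exists l.
Qed.

Section FrameRigidity.
Variable q : nat.
Local Notation K := 'F_q.
Local Notation dim1 := (@is_subspace_of_dim q 1).
Local Notation dim2 := (@is_subspace_of_dim q 2).
Local Notation point_of := (@point_of q).
Local Notation line_of := (@line_of q).

Variables Pp Pl : {set vec q} -> Prop.
Hypothesis join_closed : forall p p' l, dim1 p -> dim1 p' -> dim2 l -> p != p' ->
  p \subset l -> p' \subset l -> Pp p -> Pp p' -> Pl l.
Hypothesis meet_closed : forall p l l', dim1 p -> dim2 l -> dim2 l' -> l != l' ->
  p \subset l -> p \subset l' -> Pl l -> Pl l' -> Pp p.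

(* The line [m] separates the two points, the point [w] the two lines. *)
Lemma join_closed3 (u v : 'rV[K]_3) (n m : 'cV[K]_3) : u != 0 -> v != 0 -> n != 0 ->
  point_of u \subset line_of n -> point_of v \subset line_of n ->
  point_of u \subset line_of m -> ~~ (point_of v \subset line_of m) ->
  Pp (point_of u) -> Pp (point_of v) -> Pl (line_of n).
Proof.
move=> u_nz v_nz n_nz un vn um vm; apply: join_closed un vn;
  by rewrite ?point_of_dim ?line_of_dim // (neq_points_off_line um vm).
Qed.

Lemma meet_closed3 (v w : 'rV[K]_3) (n n' : 'cV[K]_3) : v != 0 -> n != 0 -> n' != 0 ->
  point_of v \subset line_of n -> point_of v \subset line_of n' ->
  point_of w \subset line_of n -> ~~ (point_of w \subset line_of n') ->
  Pl (line_of n) -> Pl (line_of n') -> Pp (point_of v).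
Proof.
move=> v_nz n_nz n'_nz vn vn' wn wn'; apply: meet_closed vn vn';
  by rewrite ?point_of_dim ?line_of_dim // (neq_lines_off_point wn wn').
Qed.

Hypotheses (fix001 : Pp P001) (fix101 : Pp P101) (fix011 : Pp P011).
Hypotheses (fixL001 : Pl L001) (fixL101 : Pl L101).

Lemma frame_P010 : Pp P010.
Proof. by apply: (meet_closed3 (w := rv3 1 0 0)) fixL001 fixL101; incidence. Qed.

Lemma frame_L100 : Pl L100.
Proof. by apply: (join_closed3 (m := cv3 0 1 0)) fix001 frame_P010; incidence. Qed.

Let fix_y0 : Pl (line_of (cv3 0 1 0)).
Proof. by apply: (join_closed3 (m := cv3 1 0 0)) fix001 fix101; incidence. Qed.

Let fix100 : Pp P100.
Proof. by apply: (meet_closed3 (w := rv3 0 0 1)) fix_y0 fixL001; incidence. Qed.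

Let fix111 : Pp (point_of (rv3 1 1 1)).
Proof.
have fix_yz : Pl (line_of (cv3 0 1 (-1))).
  by apply: (join_closed3 (m := cv3 1 0 0)) fix011 fix100; incidence.
have fix_xz : Pl (line_of (cv3 1 0 (-1))).
  by apply: (join_closed3 (m := cv3 0 1 0)) fix101 frame_P010; incidence.
by apply: (meet_closed3 (w := rv3 1 0 0)) fix_yz fix_xz; incidence.
Qed.

Let fix_x_succ a : Pp (point_of (rv3 a 0 1)) -> Pp (point_of (rv3 (a + 1) 0 1)).
Proof.
move=> fixa.
have fl : Pl (line_of (cv3 (-1) (-a) a)).
  by apply: (join_closed3 (m := cv3 0 1 0)) fixa fix011; incidence.
have fM : Pp (point_of (rv3 (-a) 1 0)).
  by apply: (meet_closed3 (w := rv3 a 0 1)) fl fixL001; incidence.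
have fl' : Pl (line_of (cv3 (-1) (-a) (1 + a))).
  by apply: (join_closed3 (m := cv3 0 0 1)) fM fix111; incidence.
by apply: (meet_closed3 (w := rv3 1 1 1)) fl' fix_y0; incidence.
Qed.

Let fix_y_succ b : Pp (point_of (rv3 0 b 1)) -> Pp (point_of (rv3 0 (b + 1) 1)).
Proof.
move=> fixb.
have fl : Pl (line_of (cv3 b 1 (-b))).
  by apply: (join_closed3 (m := cv3 1 0 0)) fixb fix101; incidence.
have fM : Pp (point_of (rv3 1 (-b) 0)).
  by apply: (meet_closed3 (w := rv3 0 b 1)) fl fixL001; incidence.
have fl' : Pl (line_of (cv3 b 1 (- b - 1))).
  by apply: (join_closed3 (m := cv3 0 0 1)) fM fix111; incidence.
by apply: (meet_closed3 (w := rv3 1 1 1)) fl' frame_L100; incidence.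
Qed.

Let fix_affine a b : Pp (point_of (rv3 a b 1)).
Proof.
(* Every element of the prime field is some [n%:R]: this is where primality enters. *)
have fixa : Pp (point_of (rv3 a 0 1)).
  rewrite -[a]natr_Zp; elim: (a : nat) => [|n IH]; first by rewrite mulr0n.
  by rewrite mulrSr; apply: fix_x_succ.
have fixb : Pp (point_of (rv3 0 b 1)).
  rewrite -[b]natr_Zp; elim: (b : nat) => [|n IH]; first by rewrite mulr0n.
  by rewrite mulrSr; apply: fix_y_succ.
have fl : Pl (line_of (cv3 1 0 (-a))).
  by apply: (join_closed3 (m := cv3 0 0 1)) frame_P010 fixa; incidence.
have fl' : Pl (line_of (cv3 0 1 (-b))).
  by apply: (join_closed3 (m := cv3 0 0 1)) fix100 fixb; incidence.
by apply: (meet_closed3 (w := rv3 0 1 0)) fl fl'; incidence.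
Qed.

Let fix_infinite c : Pp (point_of (rv3 1 c 0)).
Proof.
have fl : Pl (line_of (cv3 c (-1) 0)).
  by apply: (join_closed3 (m := cv3 1 0 0)) fix001 (fix_affine 1 c); incidence.
by apply: (meet_closed3 (w := rv3 0 0 1)) fl fixL001; incidence.
Qed.

Lemma frame_rigid p : dim1 p -> Pp p.
Proof.
by case/point_normal_form => [[a [b ->]] | [c ->] | ->];
  [apply: fix_affine | apply: fix_infinite | apply: frame_P010].
Qed.

End FrameRigidity.

Section CoordinateSwap.
Variable q : nat.
Local Notation dim := (@is_subspace_of_dim q).
Local Notation T := (tperm_mx 0 1 : 'M['F_q]_3).

Let TK m (M : 'M['F_q]_(m, 3)) : M *m T *m T = M.
Proof. by rewrite -mulmxA -perm_mxM tperm2 perm_mx1 mulmx1. Qed.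

Definition swap_xy (S : {set vec q}) : {set vec q} := [set x | x *m T \in S].

Lemma swap_xyK : involutive swap_xy.
Proof. by move=> S; apply/setP => x; rewrite !inE TK. Qed.

Lemma swap_xy_span (A : 'M['F_q]_3) : swap_xy (span_set A) = span_set (A *m T).
Proof.
apply/setP => x; rewrite !inE; apply/idP/idP => [/(submxMr T) | ]; first by rewrite TK.
by move/(submxMr T); rewrite TK.
Qed.

Lemma swap_xy_dim d S : dim d S -> dim d (swap_xy S).
Proof.
case/subspace_of_dimP => A <- ->; rewrite swap_xy_span.
have := subspace_of_dim_span (A *m T).
by rewrite mxrankMfree // row_free_unit unitmx_perm.
Qed.

Lemma swap_xy_subset S S' : (swap_xy S \subset swap_xy S') = (S \subset S').
Proof.
apply/subsetP/subsetP => SS' x; last by rewrite !inE => /SS'.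
by have := SS' (x *m T); rewrite !inE TK; apply.
Qed.

Lemma swap_xy_P100 : swap_xy P100 = P010.
Proof.
rewrite /point_of swap_xy_span; apply/setP => x; rewrite !inE genmxE.
rewrite (eqmxMr T (genmxE _)) -xcolE; congr (_ <= _)%MS.
by apply/matrixP => i j; rewrite !mxE; case: j => [[|[|[|]]] ?] //=; rewrite permE.
Qed.

End CoordinateSwap.

Section Vertices.
Variables q r s : nat.
Local Notation V := (LGK_vertex q r s).
Local Notation adj := (@LGK_adj q r s).

Definition is_point (v : V) : bool := if val v is inl _ then true else false.
Definition space (v : V) : {set vec q} :=
  match val v with inl (p, _) => p | inr (l, _) => l end.
Definition layer (v : V) : nat :=
  match val v with inl (_, i) => nat_of_ord i | inr (_, j) => nat_of_ord j end.

Definition point_vertex p (dp : is_subspace_of_dim 1 p) (i : 'I_r) : V :=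
  @exist (raw_vertex q r s) _ (inl (p, i)) dp.
Definition line_vertex l (dl : is_subspace_of_dim 2 l) (j : 'I_s) : V :=
  @exist (raw_vertex q r s) _ (inr (l, j)) dl.

Lemma point_space_dim v : is_point v -> is_subspace_of_dim 1 (space v).
Proof. by case: v => [[[p i]|[l j]] dv]. Qed.

Lemma line_space_dim v : ~~ is_point v -> is_subspace_of_dim 2 (space v).
Proof. by case: v => [[[p i]|[l j]] dv]. Qed.

Lemma layer_lt_point v : is_point v -> (layer v < r)%N.
Proof. by case: v => [[[p i]|[l j]] dv] //= _; apply: ltn_ord. Qed.

Lemma layer_lt_line v : ~~ is_point v -> (layer v < s)%N.
Proof. by case: v => [[[p i]|[l j]] dv] //= _; apply: ltn_ord. Qed.

Lemma LGK_adjE u v : adj u v =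
  if is_point u then ~~ is_point v && (space u \subset space v)
  else is_point v && (space v \subset space u).
Proof. by case: u v => [[[p i]|[l j]] du] [[[p' i']|[l' j']] dv]. Qed.

Lemma LGK_adj_sides u v : adj u v -> is_point u = ~~ is_point v.
Proof. by rewrite LGK_adjE; case: (is_point u); case: (is_point v). Qed.

Lemma vertexP u v :
  is_point u = is_point v -> space u = space v -> layer u = layer v -> u = v.
Proof.
case: u v => [[[p i]|[l j]] du] [[[p' i']|[l' j']] dv] //=;
rewrite /space /layer /= => _ eq_space /val_inj eq_layer;
by apply: val_inj; rewrite /= eq_space eq_layer.
Qed.

Lemma LGK_adj_twins u u' : is_point u = is_point u' -> space u = space u' ->
  adj u =1 adj u'.
Proof. by move=> eq_side eq_space w; rewrite !LGK_adjE eq_side eq_space. Qed.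

Lemma space_of_neighbors u u' : (0 < r)%N -> (0 < s)%N ->
  is_point u = is_point u' -> adj u =1 adj u' -> space u = space u'.
Proof.
move=> r_gt0 s_gt0 eq_side eq_adj; apply/eqP/negPn/negP => ne.
case pu: (is_point u) in eq_side.
  have [l [dl ul u'l]] :=
    line_avoiding (point_space_dim pu) (point_space_dim (esym eq_side)) ne.
  have := eq_adj (line_vertex dl (Ordinal s_gt0)).
  by rewrite !LGK_adjE -eq_side pu /= ul (negbTE u'l).
have [p [dp pu' pu'']] :=
  point_off_line (line_space_dim (negbT pu)) (line_space_dim (negbT (esym eq_side))) ne.
have := eq_adj (point_vertex dp (Ordinal r_gt0)).
by rewrite !LGK_adjE -eq_side pu /= pu' (negbTE pu'').
Qed.

End Vertices.

Section SidePreservingAutomorphisms.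
Variables q r s : nat.
Hypotheses (r_gt0 : (0 < r)%N) (s_gt0 : (0 < s)%N).
Local Notation V := (LGK_vertex q r s).
Local Notation point_vertex := (@point_vertex q r s).
Local Notation line_vertex := (@line_vertex q r s).
Local Notation adj := (@LGK_adj q r s).
Local Notation dim1 := (@is_subspace_of_dim q 1).
Local Notation dim2 := (@is_subspace_of_dim q 2).

Variable f : {perm V}.
Hypothesis f_aut : is_graph_aut adj f.
Hypothesis f_side : forall v, is_point (f v) = is_point v.

Lemma space_subset_aut u w : is_point u -> ~~ is_point w ->
  space u \subset space w -> space (f u) \subset space (f w).
Proof.
move=> pu lw uw; have : adj u w by rewrite LGK_adjE pu lw.
by rewrite -f_aut LGK_adjE !f_side pu (negbTE lw).
Qed.

Lemma space_aut_twins u u' : is_point u = is_point u' -> space u = space u' ->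
  space (f u) = space (f u').
Proof.
move=> eq_side eq_space; apply: space_of_neighbors; rewrite ?f_side //.
by move=> w; rewrite -[w](permKV f) !f_aut; apply: LGK_adj_twins.
Qed.

Definition fixes (b : bool) (S : {set vec q}) : Prop :=
  forall v : V, is_point v = b -> space v = S -> space (f v) = S.

Lemma fixes_vertex v : space (f v) = space v -> fixes (is_point v) (space v).
Proof. by move=> fv w eq_side eq_space; rewrite -fv; apply: space_aut_twins. Qed.

Lemma fixes_join_closed p p' l : dim1 p -> dim1 p' -> dim2 l -> p != p' ->
  p \subset l -> p' \subset l -> fixes true p -> fixes true p' -> fixes false l.
Proof.
move=> dp dp' dl ne pl p'l fp fp'; pose w := line_vertex dl (Ordinal s_gt0).
have dfw : dim2 (space (f w)) by apply: line_space_dim; rewrite f_side.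
have image_in p0 (dp0 : dim1 p0) : p0 \subset l -> fixes true p0 -> p0 \subset space (f w).
  move=> p0l fp0; rewrite -(fp0 (point_vertex dp0 (Ordinal r_gt0))) //.
  exact: space_subset_aut.
apply: (fixes_vertex (v := w)).
by apply: esym (two_points_one_line dp dp' dl dfw ne pl p'l _ _); apply: image_in.
Qed.

Lemma fixes_meet_closed p l l' : dim1 p -> dim2 l -> dim2 l' -> l != l' ->
  p \subset l -> p \subset l' -> fixes false l -> fixes false l' -> fixes true p.
Proof.
move=> dp dl dl' ne pl pl' fl fl'; pose v := point_vertex dp (Ordinal r_gt0).
have dfv : dim1 (space (f v)) by apply: point_space_dim; rewrite f_side.
have image_in l0 (dl0 : dim2 l0) : p \subset l0 -> fixes false l0 -> space (f v) \subset l0.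
  move=> pl0 fl0; rewrite -(fl0 (line_vertex dl0 (Ordinal s_gt0))) //.
  exact: space_subset_aut.
apply: (fixes_vertex (v := v)); apply/eqP/negPn/negP => nefv.
by move/eqP: ne; apply; apply: (two_points_one_line dfv dp dl dl' nefv); rewrite ?image_in.
Qed.

Lemma fixes_lines : (forall p, dim1 p -> fixes true p) -> forall l, dim2 l -> fixes false l.
Proof.
move=> fix_points l dl v lv <-.
have dfv : dim2 (space (f v)) by apply: line_space_dim; rewrite f_side lv.
apply: esym (subspace_of_dim_subset_eq (line_space_dim (negbT lv)) dfv _).
apply/subsetP => x xv; have [-> | x_nz] := eqVneq x 0; first exact: mx0_in_subspace dfv.
have dx := point_of_dim x_nz; pose u := point_vertex dx (Ordinal r_gt0).
have xu : point_of x \subset space v.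
  case/subspace_of_dimP: (line_space_dim (negbT lv)) xv => A _ ->.
  by rewrite inE point_of_subset_span.
have := space_subset_aut (u := u) isT (negbT lv) xu.
rewrite (fix_points _ dx u) // => /subsetP; apply; by rewrite inE genmxE.
Qed.

End SidePreservingAutomorphisms.

Section UpperBound.
Variables q r s : nat.
Local Notation V := (LGK_vertex q r s).
Local Notation adj := (@LGK_adj q r s).
Local Notation dim1 := (@is_subspace_of_dim q 1).
Local Notation dim2 := (@is_subspace_of_dim q 2).
Local Notation point_vertex := (@point_vertex q r s).
Local Notation line_vertex := (@line_vertex q r s).

(* A colour-preserving automorphism must
   fix [P001], [L001] and [L101], and can at most exchange [P101] and [P011]; it cannot,
   since [P011] lies on the line [L100] joining [P001] to the meet of [L001] and [L101]
   while [P101] does not. *)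
Definition special_point (p : {set vec q}) (i : nat) : bool :=
  (p == P001) && (i == 0%N) || ((p == P101) || (p == P011)) && (i == 1%N).
Definition special_line (l : {set vec q}) (j : nat) : bool :=
  (l == L001) && (j == 0%N) || (l == L101) && (j == 1%N).
Definition special (v : V) : bool :=
  if is_point v then special_point (space v) (layer v)
  else special_line (space v) (layer v).

Definition color (v : V) : nat :=
  if special v then (r + s)%N else if is_point v then layer v else (r + layer v)%N.

Lemma color_lt v : (color v < r + s + 1)%N.
Proof.
rewrite /color; case: ifP => _; first lia.
by case: ifP => [/layer_lt_point | /negbT/layer_lt_line]; lia.
Qed.

Definition coloring (v : V) : 'I_(r + s + 1) := Ordinal (color_lt v).

Lemma color_special v : (color v == r + s)%N = special v.
Proof.
rewrite /color; case: ifP => _; first exact: eqxx.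
by case: ifP => [/layer_lt_point | /negbT/layer_lt_line]; lia.
Qed.

Lemma color_point v : ~~ special v -> (color v < r)%N = is_point v.
Proof.
rewrite /color => /negbTE ->.
by case: ifP => [/layer_lt_point | /negbT/layer_lt_line]; lia.
Qed.

Hypotheses (r_gt1 : (1 < r)%N) (s_gt1 : (1 < s)%N).
(* Only used to keep [P101] off [L101]. *)
Hypothesis two_neq0 : (2%:R : 'F_q) != 0.
Let r_gt0 : (0 < r)%N := ltnW r_gt1.
Let s_gt0 : (0 < s)%N := ltnW s_gt1.

Let P001_neq_P101 : P001 != P101 :> {set vec q}.
Proof. by apply: (neq_points_off_line (l := L100)); incidence. Qed.
Let P001_neq_P011 : P001 != P011 :> {set vec q}.
Proof. by apply: (neq_points_off_line (l := line_of (cv3 0 1 0))); incidence. Qed.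
Let P101_neq_P011 : P101 != P011 :> {set vec q}.
Proof. by apply: (neq_points_off_line (l := line_of (cv3 0 1 0))); incidence. Qed.
Let L001_neq_L101 : L001 != L101 :> {set vec q}.
Proof. by apply: (neq_lines_off_point (p := P100)); incidence. Qed.

Lemma special_point_P001 i : special_point P001 i = (i == 0%N).
Proof. by rewrite /special_point eqxx (negbTE P001_neq_P101) (negbTE P001_neq_P011) /= orbF. Qed.

Lemma special_point_P101 i : special_point P101 i = (i == 1%N).
Proof. by rewrite /special_point eq_sym (negbTE P001_neq_P101) eqxx. Qed.

Lemma special_point_P011 i : special_point P011 i = (i == 1%N).
Proof. by rewrite /special_point eq_sym (negbTE P001_neq_P011) eqxx orbT. Qed.

Lemma special_line_L001 j : special_line L001 j = (j == 0%N).
Proof. by rewrite /special_line eqxx (negbTE L001_neq_L101) /= orbF. Qed.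

Lemma special_line_L101 j : special_line L101 j = (j == 1%N).
Proof. by rewrite /special_line eqxx eq_sym (negbTE L001_neq_L101). Qed.

Lemma special_point_not1 p i : special_point p i -> i != 1%N -> p = P001.
Proof. by case/orP => [/andP [/eqP -> _] | /andP [_ /eqP ->]]. Qed.

Lemma special_point_not0 p i : special_point p i -> i != 0%N -> p = P101 \/ p = P011.
Proof. by case/orP => [/andP [_ /eqP ->] | /andP [/orP [] /eqP -> _]]; [|left|right]. Qed.

Lemma special_line_not1 l j : special_line l j -> j != 1%N -> l = L001.
Proof. by case/orP => [/andP [/eqP -> _] | /andP [_ /eqP ->]]. Qed.

Lemma special_line_not0 l j : special_line l j -> j != 0%N -> l = L101.
Proof. by case/orP => [/andP [_ /eqP ->] | /andP [/eqP -> _]]. Qed.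

Lemma special_point_layer p i : special_point p i -> i = (p != P001).
Proof.
case/orP => [/andP [/eqP -> /eqP ->] | /andP [/orP [] /eqP -> /eqP ->]] //;
by rewrite ?eqxx // eq_sym ?P001_neq_P101 ?P001_neq_P011.
Qed.

Lemma special_line_layer l j : special_line l j -> j = (l != L001).
Proof.
by case/orP => [/andP [/eqP -> /eqP ->] | /andP [/eqP -> /eqP ->]];
  rewrite ?eqxx // eq_sym L001_neq_L101.
Qed.

Lemma special_not_incident p i l j :
  special_point p i -> special_line l j -> ~~ (p \subset l).
Proof.
case/orP => [/andP [/eqP -> _] | /andP [/orP [] /eqP -> _]];
case/orP => [/andP [/eqP -> _] | /andP [/eqP -> _]]; incidence.
Qed.

Lemma coloring_proper : proper_coloring adj coloring.
Proof.
move=> u v uv; apply/eqP => /(congr1 val) /= eq_color.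
have sides := LGK_adj_sides uv.
have eq_special : special u = special v by rewrite -!color_special eq_color.
case su: (special u) in eq_special.
  move: uv su (esym eq_special); rewrite LGK_adjE /special sides.
  case: (is_point v) => /= sub su sv.
    by move: sub; apply/negP; apply: special_not_incident sv su.
  by move: sub; apply/negP; apply: special_not_incident su sv.
have sv : ~~ special v by rewrite -eq_special.
have := color_point (negbT su); rewrite eq_color color_point // sides.
by case: (is_point v).
Qed.

Lemma plain_neighbor v : exists w, adj v w && ~~ special w.
Proof.
case pv: (is_point v).
  have [l dl pl] := line_through_point (point_space_dim pv).
  have [j plain_j] : exists j : 'I_s, ~~ special_line l j.
    case s0: (special_line l 0); last by exists (Ordinal s_gt0); rewrite s0.
    exists (Ordinal s_gt1); apply/negP => /special_line_layer.
    by rewrite -(special_line_layer s0).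
  by exists (line_vertex dl j); rewrite LGK_adjE pv pl.
have [p [dp pl _]] := meet_lines (line_space_dim (negbT pv)) (line_space_dim (negbT pv)).
have [i plain_i] : exists i : 'I_r, ~~ special_point p i.
  case s0: (special_point p 0); last by exists (Ordinal r_gt0); rewrite s0.
  exists (Ordinal r_gt1); apply/negP => /special_point_layer.
  by rewrite -(special_point_layer s0).
by exists (point_vertex dp i); rewrite LGK_adjE pv pl.
Qed.

Section ColorPreservingAutomorphisms.
Variable f : {perm V}.
Hypothesis f_aut : is_graph_aut adj f.
Hypothesis f_color : forall v, coloring (f v) = coloring v.

Let color_aut v : color (f v) = color v.
Proof. by have := congr1 val (f_color v). Qed.

Lemma special_aut v : special (f v) = special v.
Proof. by rewrite -!color_special color_aut. Qed.

Lemma plain_aut v : ~~ special v -> is_point (f v) = is_point v /\ layer (f v) = layer v.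
Proof.
move=> sv; have sfv : ~~ special (f v) by rewrite special_aut.
have side : is_point (f v) = is_point v by rewrite -color_point // color_aut color_point.
split=> //; have := color_aut v; rewrite /color (negbTE sv) (negbTE sfv) side.
by case: (is_point v) => // /addnI.
Qed.

Lemma side_aut v : is_point (f v) = is_point v.
Proof.
have [w /andP [vw sw]] := plain_neighbor v.
have fvw : adj (f v) (f w) by rewrite f_aut.
by rewrite (LGK_adj_sides fvw) (LGK_adj_sides vw) (plain_aut sw).1.
Qed.

Local Notation fixes := (fixes f).
Local Notation space_aut_twins := (space_aut_twins r_gt0 s_gt0 f_aut side_aut).
Local Notation fixes_vertex := (fixes_vertex r_gt0 s_gt0 f_aut side_aut).

Lemma special_image u u' : special u -> ~~ special u' ->
  is_point u = is_point u' -> space u = space u' ->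
  special (f u) && (layer (f u) != layer u').
Proof.
move=> su su' eq_side eq_space; rewrite special_aut su -(plain_aut su').2 /=.
apply: contraTneq su' => eq_layer.
have fu_fu' : f u = f u'.
  by apply: vertexP; rewrite ?side_aut // (space_aut_twins eq_side).
by rewrite -special_aut -fu_fu' special_aut su.
Qed.

Lemma fixes_P001 : fixes true P001.
Proof.
have dp : dim1 P001 by apply: point_of_dim; incidence.
pose u := point_vertex dp (Ordinal r_gt0).
have := special_image (u := u) (u' := point_vertex dp (Ordinal r_gt1)).
rewrite /special /= side_aut /= !special_point_P001 => /(_ isT isT erefl erefl).
case/andP => /special_point_not1 fu /fu {}fu.
exact: (fixes_vertex (v := u)).
Qed.

Lemma fixes_L001 : fixes false L001.
Proof.
have dl : dim2 L001 by apply: line_of_dim; incidence.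
pose u := line_vertex dl (Ordinal s_gt0).
have := special_image (u := u) (u' := line_vertex dl (Ordinal s_gt1)).
rewrite /special /= side_aut /= !special_line_L001 => /(_ isT isT erefl erefl).
case/andP => /special_line_not1 fu /fu {}fu.
exact: (fixes_vertex (v := u)).
Qed.

Lemma fixes_L101 : fixes false L101.
Proof.
have dl : dim2 L101 by apply: line_of_dim; incidence.
pose u := line_vertex dl (Ordinal s_gt1).
have := special_image (u := u) (u' := line_vertex dl (Ordinal s_gt0)).
rewrite /special /= side_aut /= !special_line_L101 => /(_ isT isT erefl erefl).
case/andP => /special_line_not0 fu /fu {}fu.
exact: (fixes_vertex (v := u)).
Qed.

Let join_closed := fixes_join_closed r_gt0 s_gt0 f_aut side_aut.
Let meet_closed := fixes_meet_closed r_gt0 s_gt0 f_aut side_aut.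

Lemma fixes_P011 : fixes true P011.
Proof.
have dp : dim1 P011 by apply: point_of_dim; incidence.
pose u := point_vertex dp (Ordinal r_gt1).
have := special_image (u := u) (u' := point_vertex dp (Ordinal r_gt0)).
rewrite /special /= side_aut /= !special_point_P011 => /(_ isT isT erefl erefl).
case/andP => /special_point_not0 fu /fu [fu_P101 | fu_P011]; last first.
  exact: (fixes_vertex (v := u)).
have dl : dim2 L100 by apply: line_of_dim; incidence.
pose w := line_vertex dl (Ordinal s_gt0).
have : space (f u) \subset space (f w).
  by apply: (space_subset_aut f_aut side_aut) => //=; incidence.
have fix_L100 : fixes false L100 :=
  frame_L100 join_closed meet_closed fixes_P001 fixes_L001 fixes_L101.
have P101_off : ~~ (P101 \subset (L100 : {set vec q})) by incidence.
by rewrite (fix_L100 w) // fu_P101 (negbTE P101_off).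
Qed.

Lemma fixes_P101 : fixes true P101.
Proof.
have dp : dim1 P101 by apply: point_of_dim; incidence.
pose u := point_vertex dp (Ordinal r_gt1); pose u' := point_vertex dp (Ordinal r_gt0).
have := special_image (u := u) (u' := u').
rewrite /special /= side_aut /= !special_point_P101 => /(_ isT isT erefl erefl).
case/andP => /special_point_not0 fu /fu [fu_P101 | fu_P011].
  exact: (fixes_vertex (v := u)).
have dW : dim1 P011 by apply: point_of_dim; incidence.
pose w := point_vertex dW (Ordinal r_gt0).
have pu' : ~~ special u' by rewrite /special /= special_point_P101.
have pw : ~~ special w by rewrite /special /= special_point_P011.
have fu'_fw : f u' = f w.
  apply: vertexP; rewrite ?side_aut ?(plain_aut pu').2 ?(plain_aut pw).2 //.
  rewrite (@fixes_P011 w) // -fu_P011.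
  exact: (space_aut_twins (u := u') (u' := u)).
by case/eqP: P101_neq_P011; apply: (congr1 (@space _ _ _) (perm_inj fu'_fw)).
Qed.

Lemma color_preserving_aut_trivial : f = 1%g.
Proof.
have fix_points := frame_rigid join_closed meet_closed
  fixes_P001 fixes_P101 fixes_P011 fixes_L001 fixes_L101.
have fix_space v : space (f v) = space v.
  case pv: (is_point v).
    exact: (fix_points _ (point_space_dim pv) v pv).
  exact: (fixes_lines r_gt0 f_aut side_aut fix_points (line_space_dim (negbT pv)) pv).
apply/permP => v; rewrite perm1; apply: vertexP; rewrite ?side_aut ?fix_space //.
have [sv | /plain_aut [] //] := boolP (special v).
move: sv (sv); rewrite -{1}special_aut /special side_aut fix_space.
by case: (is_point v) => [/special_point_layer -> /special_point_layer ->
                         |/special_line_layer -> /special_line_layer ->].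
Qed.

End ColorPreservingAutomorphisms.

Lemma coloring_distinguishing : distinguishing adj coloring.
Proof. by move=> f f_aut f_color; apply: color_preserving_aut_trivial. Qed.

End UpperBound.

Section LowerBound.
Variables q r s k : nat.
Hypothesis r_gt0 : (0 < r)%N.
Local Notation V := (LGK_vertex q r s).
Local Notation adj := (@LGK_adj q r s).
Local Notation dim1 := (@is_subspace_of_dim q 1).
Local Notation dim2 := (@is_subspace_of_dim q 2).
Local Notation point_vertex := (@point_vertex q r s).
Local Notation line_vertex := (@line_vertex q r s).

Variable c : V -> 'I_k.
Hypotheses (c_proper : proper_coloring adj c) (c_dist : distinguishing adj c).

Lemma twin_colors_neq u u' : u != u' ->
  is_point u = is_point u' -> space u = space u' -> c u != c u'.
Proof.
move=> neq eq_side eq_space; apply: contra_neq neq => eq_c.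
have tperm_twins w : is_point (tperm u u' w) = is_point w /\ space (tperm u u' w) = space w.
  by case: tpermP => [->|->|].
have tperm_aut : is_graph_aut adj (tperm u u').
  move=> w w'; rewrite !LGK_adjE.
  by have [-> ->] := tperm_twins w; have [-> ->] := tperm_twins w'.
have tperm_color w : c (tperm u u' w) = c w by case: tpermP => [->|->|].
by move/permP/(_ u): (c_dist tperm_aut tperm_color); rewrite tpermL perm1.
Qed.

Definition copies (b : bool) (S : {set vec q}) : {set V} :=
  [set v | (is_point v == b) && (space v == S)].
Definition palette (b : bool) (S : {set vec q}) : {set 'I_k} := c @: copies b S.

Lemma card_palette b S : #|palette b S| = #|copies b S|.
Proof.
apply: card_in_imset => v v'; rewrite !inE => /andP [/eqP pv /eqP sv] /andP [/eqP pv' /eqP sv'].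
by apply: contra_eq => /twin_colors_neq; apply; rewrite ?pv ?pv' ?sv ?sv'.
Qed.

Lemma card_point_copies p (dp : dim1 p) : #|copies true p| = r.
Proof.
have -> : copies true p = [set point_vertex dp i | i : 'I_r].
  apply/setP => v; rewrite !inE; apply/andP/imsetP => [[/eqP pv /eqP sv] | [i _ ->]] //.
  by exists (Ordinal (layer_lt_point pv)) => //; apply: vertexP.
by rewrite card_imset ?card_ord // => i j /(congr1 (@layer _ _ _)) /val_inj.
Qed.

Lemma card_line_copies l (dl : dim2 l) : #|copies false l| = s.
Proof.
have -> : copies false l = [set line_vertex dl j | j : 'I_s].
  apply/setP => v; rewrite !inE; apply/andP/imsetP => [[/eqP pv /eqP sv] | [j _ ->]] //.
  by exists (Ordinal (layer_lt_line (negbT pv))) => //; apply: vertexP.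
by rewrite card_imset ?card_ord // => i j /(congr1 (@layer _ _ _)) /val_inj.
Qed.

Lemma palettes_disjoint (p l : {set vec q}) : p \subset l ->
  palette true p :&: palette false l = set0.
Proof.
move=> pl; apply/setP => x; rewrite !inE; apply/andP => -[/imsetP [u + ->] /imsetP [w]].
rewrite !inE => /andP [/eqP pu /eqP su] /andP [/eqP pw /eqP sw] /eqP.
by apply/negP/c_proper; rewrite LGK_adjE pu pw su sw.
Qed.

Lemma card_incident_palettes (p l : {set vec q}) : dim1 p -> dim2 l -> p \subset l ->
  #|palette true p :|: palette false l| = (r + s)%N.
Proof.
move=> dp dl pl; rewrite cardsU (palettes_disjoint pl) cards0 subn0.
by rewrite !card_palette card_point_copies // card_line_copies.
Qed.

Lemma colors_ge : (r + s <= k)%N.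
Proof.
have dp : dim1 P001 by apply: point_of_dim; incidence.
have dl : dim2 L100 by apply: line_of_dim; incidence.
have pl : P001 \subset (L100 : {set vec q}) by incidence.
by rewrite -(card_incident_palettes dp dl pl); apply: leq_trans (max_card _) _; rewrite card_ord.
Qed.

Section ExactlyRPlusSColors.
Hypothesis k_eq : k = (r + s)%N.

Lemma palette_point_compl (p l : {set vec q}) : dim1 p -> dim2 l -> p \subset l ->
  palette true p = ~: palette false l.
Proof.
move=> dp dl pl; apply/eqP; rewrite eqEcard; apply/andP; split.
  apply/subsetP => x xp; rewrite inE; apply/negP => xl.
  by have := palettes_disjoint pl; move/setP/(_ x); rewrite !inE xp xl.
by rewrite cardsCs setCK card_ord !card_palette card_point_copies // card_line_copies // k_eq addnK.
Qed.

Lemma palette_points (p p' : {set vec q}) : dim1 p -> dim1 p' -> palette true p = palette true p'.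
Proof.
move=> dp dp'; have [-> // | ne] := eqVneq p p'.
have [l [dl pl p'l]] := join_points dp dp' ne.
by rewrite (palette_point_compl dp dl pl) (palette_point_compl dp' dl p'l).
Qed.

Lemma palette_lines (l l' : {set vec q}) : dim2 l -> dim2 l' -> palette false l = palette false l'.
Proof.
move=> dl dl'; have [p [dp pl pl']] := meet_lines dl dl'.
by apply: setC_inj; rewrite -(palette_point_compl dp dl pl) -(palette_point_compl dp dl' pl').
Qed.

Lemma palette_swap_xy (v : V) :
  palette (is_point v) (swap_xy (space v)) = palette (is_point v) (space v).
Proof.
case pv: (is_point v).
  by have dp := point_space_dim pv; apply: palette_points (swap_xy_dim dp) dp.
by have dl := line_space_dim (negbT pv); apply: palette_lines (swap_xy_dim dl) dl.
Qed.

(* Such a vertex exists because all point (resp. line) palettes coincide. *)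
Definition swap_partner (v : V) : V :=
  odflt v [pick w : V |
    [&& is_point w == is_point v, space w == swap_xy (space v) & c w == c v]].

Lemma swap_partnerP v : [/\ is_point (swap_partner v) = is_point v,
  space (swap_partner v) = swap_xy (space v) & c (swap_partner v) = c v].
Proof.
rewrite /swap_partner; case: pickP => [w /and3P [/eqP -> /eqP -> /eqP ->] // | none].
have : c v \in palette (is_point v) (swap_xy (space v)).
  by rewrite palette_swap_xy; apply: imset_f; rewrite inE !eqxx.
by case/imsetP => w; rewrite inE => /andP [pw sw] cw; move: (none w); rewrite pw sw cw eqxx.
Qed.

Lemma swap_partner_inj : injective swap_partner.
Proof.
move=> v v' eq_partner; apply/eqP/negPn/negP => neq.
have [pv sv cv] := swap_partnerP v; have [pv' sv' cv'] := swap_partnerP v'.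
have eq_side : is_point v = is_point v' by rewrite -pv -pv' eq_partner.
have eq_space : space v = space v'.
  by apply: (can_inj (@swap_xyK q)); rewrite -sv -sv' eq_partner.
by move: (twin_colors_neq neq eq_side eq_space); rewrite -cv -cv' eq_partner eqxx.
Qed.

Lemma no_distinguishing_coloring : False.
Proof.
pose F := perm swap_partner_inj.
have F_aut : is_graph_aut adj F.
  move=> v w; rewrite !permE !LGK_adjE.
  case: (swap_partnerP v) => -> -> _; case: (swap_partnerP w) => -> -> _.
  by rewrite !swap_xy_subset.
have F_color v : c (F v) = c v by rewrite permE; case: (swap_partnerP v).
have dX : dim1 P100 by apply: point_of_dim; incidence.
pose u := point_vertex dX (Ordinal r_gt0).
have := congr1 (fun g : {perm V} => space (g u)) (c_dist F_aut F_color).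
rewrite perm1 permE /=; case: (swap_partnerP u) => _ -> _; rewrite swap_xy_P100 => P010_P100.
have : P010 \subset (L100 : {set vec q}) by incidence.
by rewrite P010_P100; incidence.
Qed.

End ExactlyRPlusSColors.

Lemma colors_gt : (r + s < k)%N.
Proof.
rewrite ltn_neqAle colors_ge andbT; apply/eqP => k_eq.
exact: no_distinguishing_coloring (esym k_eq).
Qed.

End LowerBound.

Lemma two_neq0_Fp p : prime p -> (2 < p)%N -> (2%:R : 'F_p) != 0.
Proof.
move=> p_prime p_gt2; rewrite -(dvdn_pcharf (pchar_Fp p_prime)).
by apply: contraTN p_gt2 => /dvdn_leq; rewrite -leqNgt; apply.
Qed.

Theorem mainTheorem13 (q r s : nat) :
  prime q -> (5 <= q)%N -> (2 <= r)%N -> (2 <= s)%N ->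
  chiD_is (@LGK_adj q r s) (r + s + 1).
Proof.
move=> q_prime q_ge5 r_ge2 s_ge2.
have two_neq0 : (2%:R : 'F_q) != 0 by apply: two_neq0_Fp; lia.
split.
  exists (@coloring q r s); split; first exact: coloring_proper.
  exact: coloring_distinguishing.
move=> k k_lt [c [c_proper c_dist]].
have := colors_gt (ltnW r_ge2) c_proper c_dist; lia.
Qed.
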